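(* Let $G$ be an $n\times n$ Game of Primes grid (defined in the context) with update map $F$, and let $s_0, s_1, s_2,\dots$ be its sequence of days, where $s_0$ is the configuration in which every cell is dormant and $s_{t+1}=F(s_t)$ for all $t\ge 0$. Let $S=\{s_t : t\ge 0\}$ be the set of all distinct days that occur. Then for every day $k$, there are at most two days $a\in S$ with $F(a)=k$.
   Context: A Game of Primes (GOPM) grid of dimension $n$ is an $n\times n$ grid whose cells are filled with the $n^2$ natural numbers $a, a+d, a+2d,\dots,a+(n^2-1)d$ (for fixed integers $a\ge 1$, $d\ge 1$) in snake-like (boustrophedon) order: the first row is filled left to right starting with $a$ in the top-left cell, the second row right to left, the third row left to right, and so on. Two distinct cells are neighbors if they are adjacent horizontally, vertically or diagonally (so each cell has at most 8 neighbors, a corner cell exactly 3). Each cell is in one of two states, excited or dormant. A configuration (''day'') is an assignment of a state to every cell. For a configuration $s$ and a cell $c$, let $N_s(c)$ be the number of neighbors of $c$ that contain a prime number or are excited in $s$ (or both). The update map $F$ sends $s$ to the configuration $F(s)$ in which: a cell $c$ dormant in $s$ is excited in $F(s)$ iff $N_s(c)\ge 3$; a cell $c$ excited in $s$ is dormant in $F(s)$ iff $N_s(c)\ge 4$ or $N_s(c)=0$, and otherwise remains excited. Day $0$ is the configuration with all cells dormant, and day $t+1$ is $F$ applied to day $t$. *)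

From mathcomp Require Import all_boot.
Set Implicit Arguments. Unset Strict Implicit. Unset Printing Implicit Defensive.

(* Cells of an n x n grid: (row, column), rows/columns indexed from 0,
   row 0 is the top row, column 0 the leftmost column. *)
Definition cell (n : nat) := ('I_n * 'I_n)%type.

(* A configuration ("day"): true = excited, false = dormant. *)
Definition config (n : nat) := {ffun cell n -> bool}.

Definition snake_index (n : nat) (c : cell n) : nat :=
  let i := nat_of_ord c.1 in let j := nat_of_ord c.2 in
  if odd i then i * n + (n - 1 - j) else i * n + j.

Definition gopm_value (n a d : nat) (c : cell n) : nat := a + snake_index c * d.

Definition neighbor (n : nat) (c c' : cell n) : bool :=
  [&& c != c',
      nat_of_ord c.1 <= (nat_of_ord c'.1).+1, nat_of_ord c'.1 <= (nat_of_ord c.1).+1,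
      nat_of_ord c.2 <= (nat_of_ord c'.2).+1 & nat_of_ord c'.2 <= (nat_of_ord c.2).+1].

Definition active_neighbors (n a d : nat) (s : config n) (c : cell n) : nat :=
  #|[set c' : cell n | neighbor c c' && (prime (gopm_value a d c') || s c')]|.

Definition gopm_step (n a d : nat) (s : config n) : config n :=
  [ffun c => let N := active_neighbors a d s c in
             if s c then ~~ ((4 <= N) || (N == 0)) else 3 <= N].

Definition day0 (n : nat) : config n := [ffun => false].

Definition day (n a d : nat) (t : nat) : config n := iter t (gopm_step a d) (day0 n).
Arguments day : clear implicits.

Definition occurs (n a d : nat) (s : config n) : Prop := exists t, s = day n a d t.

From mathcomp Require Import all_boot.
From mathcomp Require Import zify.

(* Nothing about the Game of Primes is used. Write x_t = f^t(x_0) for the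
   orbit of day 0. If f x_i = f x_j = f x_l with i < j and i < l, then
   x_(i+1) = x_(j+1) = x_(l+1), so from x_(i+1) on the orbit is periodic both
   with period p = j - i and with period q = l - i; hence x_j and x_l both
   equal x_(i + pq). *)

Section OrbitPreimages.

Variables (T : Type) (f : T -> T) (x0 : T).

Lemma iter_periodic m p h k :
  m <= h -> iter (m + p) f x0 = iter m f x0 ->
  iter (h + k * p) f x0 = iter h f x0.
Proof.
move=> le_mh per_m; elim: k => [|k IHk]; first by rewrite addn0.
have -> : h + k.+1 * p = (h - m + k * p) + (m + p) by rewrite mulSn; lia.
by rewrite iterD per_m -iterD; have -> : h - m + k * p + m = h + k * p by lia.
Qed.

Lemma orbit_later_preimages_eq y i j l :
  i < j -> i < l ->
  f (iter i f x0) = y -> f (iter j f x0) = y -> f (iter l f x0) = y ->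
  iter j f x0 = iter l f x0.
Proof.
move=> lt_ij lt_il; rewrite -!iterS => <- Eji Eli.
have per_j : iter (i.+1 + (j - i)) f x0 = iter i.+1 f x0.
  by rewrite -Eji; congr (iter _ f x0); lia.
have per_l : iter (i.+1 + (l - i)) f x0 = iter i.+1 f x0.
  by rewrite -Eli; congr (iter _ f x0); lia.
rewrite -(iter_periodic _ _ j (l - i).-1 _ per_j); last by lia.
rewrite -(iter_periodic _ _ l (j - i).-1 _ per_l); last by lia.
by congr (iter _ f x0); nia.
Qed.

Lemma orbit_preimages_at_most_two y x1 x2 x3 :
  (exists i, x1 = iter i f x0) -> (exists j, x2 = iter j f x0) ->
  (exists l, x3 = iter l f x0) ->
  f x1 = y -> f x2 = y -> f x3 = y ->
  x1 = x2 \/ x1 = x3 \/ x2 = x3.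
Proof.
move=> [i ->] [j ->] [l ->] Ei Ej El.
case: (ltngtP i j) => [lt_ij|lt_ji|->]; last by left.
- case: (ltngtP i l) => [lt_il|lt_li|->]; last by right; left.
  + by right; right; apply: orbit_later_preimages_eq lt_ij lt_il Ei Ej El.
  + by left; apply: orbit_later_preimages_eq lt_li (ltn_trans lt_li lt_ij) El Ei Ej.
- case: (ltngtP j l) => [lt_jl|lt_lj|->]; last by right; right.
  + by right; left; apply: orbit_later_preimages_eq lt_ji lt_jl Ej Ei El.
  + by left; apply: orbit_later_preimages_eq (ltn_trans lt_lj lt_ji) lt_lj El Ei Ej.
Qed.

End OrbitPreimages.

Theorem theorem4p1 (n a d : nat) (ha : 1 <= a) (hd : 1 <= d) (k : config n) :
  forall x y z : config n,
    occurs a d x -> occurs a d y -> occurs a d z ->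
    gopm_step a d x = k -> gopm_step a d y = k -> gopm_step a d z = k ->
    x = y \/ x = z \/ y = z.
Proof. exact: orbit_preimages_at_most_two. Qed.
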